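(* Let $A\in\{0,1\}^{N\times n}$ and suppose there are $j\in[N]$ and $i_1\ne i_2\in[n]$ with $A_{ji_1}=A_{ji_2}=1$. Let $U_1,\dots,U_N,V_1,\dots,V_n\in\mathbb{R}^d$ be a margin-$m$, relative-bias-$\tau$ embedding of $A$ (for some $m\ge0$, $\tau\in\mathbb{R}$) with $\langle U_j,V_{i_1}\rangle\ne\langle U_j,V_{i_2}\rangle$. Define, for $t>0$, $$\mathcal{L}_{\mathrm{InfoNCE}}(\{U_j\},\{V_i\};t)=-\sum_{(j',i)\in[N]\times[n]:\,A_{j'i}=1}\log\frac{\exp(t\langle U_{j'},V_i\rangle)}{\sum_{\ell=1}^n\exp(t\langle U_{j'},V_\ell\rangle)}.$$ Then $\lim_{T\to+\infty}\mathcal{L}_{\mathrm{InfoNCE}}(\{U_j\},\{V_i\};T)=+\infty$.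
   Context: For $A\in\{0,1\}^{N\times n}$, $m\ge0$ and $\tau\in\mathbb{R}$, unit vectors $U_1,\dots,U_N,V_1,\dots,V_n\in\mathbb{R}^d$ form a margin-$m$, relative-bias-$\tau$ embedding of $A$ if $\langle U_j,V_i\rangle\ge\tau+m$ whenever $A_{ji}=1$ and $\langle U_j,V_i\rangle\le\tau-m$ whenever $A_{ji}=0$. *)

From HB Require Import structures.
From mathcomp Require Import all_boot all_order all_algebra.
From mathcomp Require Import all_classical all_reals all_analysis.
Set Implicit Arguments. Unset Strict Implicit. Unset Printing Implicit Defensive.
Import Order.TTheory GRing.Theory Num.Theory.
Local Open Scope ring_scope.

Definition dotp (R : realType) (d : nat) (u v : 'rV[R]_d) : R :=
  \sum_(k < d) u ord0 k * v ord0 k.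

Definition unit_vec (R : realType) (d : nat) (u : 'rV[R]_d) : Prop :=
  dotp u u = 1.

Definition margin_embedding (R : realType) (d N n : nat)
  (A : 'I_N -> 'I_n -> bool) (m tau : R)
  (U : 'I_N -> 'rV[R]_d) (V : 'I_n -> 'rV[R]_d) : Prop :=
  (forall j, unit_vec (U j)) /\ (forall i, unit_vec (V i)) /\
  (forall j i, A j i -> tau + m <= dotp (U j) (V i)) /\
  (forall j i, ~~ A j i -> dotp (U j) (V i) <= tau - m).

Definition infoNCE (R : realType) (d N n : nat)
  (A : 'I_N -> 'I_n -> bool)
  (U : 'I_N -> 'rV[R]_d) (V : 'I_n -> 'rV[R]_d) (t : R) : R :=
  - \sum_(j < N) \sum_(i < n | A j i)
      ln (expR (t * dotp (U j) (V i)) /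
          \sum_(l < n) expR (t * dotp (U j) (V l))).

(* Summing only the terms of row j at the two positive entries i1 and i2, the
   loss at temperature T is at least T (s2 - s1) and at least T (s1 - s2),
   where s_k = <U_j, V_ik>: indeed -log softmax(s)_i = log sum_l exp s_l - s_i
   dominates s_i' - s_i for every i'.  Hence the loss is at least T |s1 - s2|,
   which tends to +oo because s1 <> s2. *)
From HB Require Import structures.
From mathcomp Require Import all_boot all_order all_algebra.
From mathcomp Require Import all_classical all_reals all_analysis.
Set Implicit Arguments. Unset Strict Implicit. Unset Printing Implicit Defensive.
Import Order.TTheory GRing.Theory Num.Theory.
Local Open Scope classical_set_scope.
Local Open Scope ring_scope.

Lemma ler_sum_term (R : numDomainType) (I : finType) (P : pred I)
    (F : I -> R) (i : I) :
  (forall k, P k -> 0 <= F k) -> P i -> F i <= \sum_(k | P k) F k.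
Proof.
move=> F_ge0 Pi; rewrite (bigD1 i) //= lerDl.
by apply: sumr_ge0 => k /andP[Pk _]; exact: F_ge0.
Qed.

Lemma ler_sum_term2 (R : numDomainType) (I J : finType) (P : I -> pred J)
    (F : I -> J -> R) (i : I) (j : J) :
  (forall k l, P k l -> 0 <= F k l) -> P i j ->
  F i j <= \sum_k \sum_(l | P k l) F k l.
Proof.
move=> F_ge0 Pij; apply: le_trans (ler_sum_term (F_ge0 i) Pij) _.
by apply: (ler_sum_term (P := predT)) => // k _; apply: sumr_ge0 => l /F_ge0.
Qed.

Definition neg_log_softmax (R : realType) (n : nat) (s : 'I_n -> R)
    (i : 'I_n) : R :=
  - ln (expR (s i) / \sum_(l < n) expR (s l)).

Section NegLogSoftmax.
Variables (R : realType) (n : nat) (s : 'I_n -> R).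

Lemma expR_le_sum_expR (k : 'I_n) : expR (s k) <= \sum_(l < n) expR (s l).
Proof. by apply: (ler_sum_term (P := predT)) => // l _; exact: expR_ge0. Qed.

Lemma sum_expR_gt0 (k : 'I_n) : 0 < \sum_(l < n) expR (s l).
Proof. exact: lt_le_trans (expR_gt0 (s k)) (expR_le_sum_expR k). Qed.

Lemma neg_log_softmaxE (i : 'I_n) :
  neg_log_softmax s i = ln (\sum_(l < n) expR (s l)) - s i.
Proof.
rewrite /neg_log_softmax lnM ?posrE ?expR_gt0 ?invr_gt0 ?(sum_expR_gt0 i) //.
by rewrite lnV ?posrE ?(sum_expR_gt0 i) // expRK opprD opprK addrC.
Qed.

Lemma neg_log_softmax_ge_gap (i i' : 'I_n) : s i' - s i <= neg_log_softmax s i.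
Proof.
rewrite neg_log_softmaxE lerD2r -ler_expR lnK ?posrE ?(sum_expR_gt0 i) //.
exact: expR_le_sum_expR.
Qed.

Lemma neg_log_softmax_ge0 (i : 'I_n) : 0 <= neg_log_softmax s i.
Proof. by have := neg_log_softmax_ge_gap i i; rewrite subrr. Qed.

End NegLogSoftmax.

Section InfoNCE.
Variables (R : realType) (d N n : nat) (A : 'I_N -> 'I_n -> bool).
Variables (U : 'I_N -> 'rV[R]_d) (V : 'I_n -> 'rV[R]_d).

Lemma infoNCEE (t : R) : infoNCE A U V t =
  \sum_(j < N) \sum_(i < n | A j i)
    neg_log_softmax (fun l => t * dotp (U j) (V l)) i.
Proof. by rewrite /infoNCE -sumrN; apply: eq_bigr => j _; rewrite -sumrN. Qed.

Lemma infoNCE_ge_gap (t : R) (j : 'I_N) (i i' : 'I_n) : A j i ->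
  t * (dotp (U j) (V i') - dotp (U j) (V i)) <= infoNCE A U V t.
Proof.
move=> Aji; rewrite infoNCEE mulrBr.
apply: le_trans (neg_log_softmax_ge_gap (fun l => t * dotp (U j) (V l)) i i') _.
apply: (ler_sum_term2
  (F := fun k l => neg_log_softmax (fun l' => t * dotp (U k) (V l')) l)) Aji.
by move=> k l _; exact: neg_log_softmax_ge0.
Qed.

Lemma infoNCE_ge_norm_gap (t : R) (j : 'I_N) (i1 i2 : 'I_n) :
  A j i1 -> A j i2 ->
  `|t * (dotp (U j) (V i1) - dotp (U j) (V i2))| <= infoNCE A U V t.
Proof. by move=> A1 A2; rewrite ler_norml lerNl -mulrN opprB !infoNCE_ge_gap. Qed.

End InfoNCE.

Theorem propositionH1 (R : realType) (d N n : nat)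
  (A : 'I_N -> 'I_n -> bool) (j : 'I_N) (i1 i2 : 'I_n)
  (m tau : R) (U : 'I_N -> 'rV[R]_d) (V : 'I_n -> 'rV[R]_d) :
  i1 != i2 -> A j i1 -> A j i2 -> 0 <= m ->
  margin_embedding A m tau U V ->
  dotp (U j) (V i1) != dotp (U j) (V i2) ->
  infoNCE A U V T @[T --> +oo] --> +oo.
Proof.
move=> _ A1 A2 _ _ s12.
set c := dotp (U j) (V i1) - dotp (U j) (V i2).
have c_gt0 : 0 < `|c| by rewrite normr_gt0 subr_eq0.
apply: (@ger_cvgy _ _ _ _ (fun T => T * `|c|)).
  apply: nearW => T; apply: le_trans (infoNCE_ge_norm_gap U V T A1 A2).
  by rewrite normrM ler_pM2r // ler_norm.
exact: gt0_cvgMly c_gt0 cvg_id.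
Qed.
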